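(* Let $(\mathcal{R},\mu)$ be resonant, let $\|\cdot\|_X$ be an r.i. quasi-Banach function norm on $\mathcal{M}(\mathcal{R},\mu)$ satisfying (P5), and let $\|\cdot\|_{\overline{X}}$ be the r.i. quasi-Banach function norm on $\mathcal{M}([0,\infty),\lambda)$ constructed as in the context (it also satisfies (P5)). Denote by $\|\cdot\|_{X'}$ and $\|\cdot\|_{(\overline{X})'}$ the associate norms of $\|\cdot\|_X$ and $\|\cdot\|_{\overline{X}}$, respectively. Then for every $f\in\mathcal{M}(\mathcal{R},\mu)$, $$\|f\|_{X'}=\|f^*\|_{(\overline{X})'}.$$
   Context: Let $(\mathcal{R},\mu)$ be a $\sigma$-finite measure space; $\mathcal{M}$ denotes the $\mu$-measurable extended complex-valued functions (identified a.e.), $\mathcal{M}_+$ the non-negative ones. $f_*(s)=\mu(\{|f|>s\})$, $f^*(t)=\inf\{s\ge0;\,f_*(s)\le t\}$ (non-increasing rearrangement). $(\mathcal{R},\mu)$ is called resonant if it is either non-atomic or completely atomic with all atoms of equal measure. A quasi-Banach function norm is a map $\|\cdot\|:\mathcal{M}\to[0,\infty]$ with $\|f\|=\||f|\|$ such that on $\mathcal{M}_+$: (Q1) $\|af\|=|a|\|f\|$, $\|f\|=0\iff f=0$ a.e., and there is $C\ge1$ (modulus of concavity) with $\|f+g\|\le C(\|f\|+\|g\|)$; (P2) $f\le g$ a.e. implies $\|f\|\le\|g\|$; (P3) $f_n\uparrow f$ a.e. implies $\|f_n\|\uparrow\|f\|$; (P4) $\|\chi_E\|<\infty$ whenever $\mu(E)<\infty$.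 Property (P5): for every $E$ with $\mu(E)<\infty$ there is $C_E<\infty$ with $\int_E f\,d\mu\le C_E\|f\|$ for all $f\in\mathcal{M}_+$. The norm is rearrangement-invariant (r.i.) if $\|f\|=\|g\|$ whenever $f^*=g^*$. For an r.i. quasi-Banach function norm $\|\cdot\|_X$ satisfying (P5), its associate norm is $\|f\|_{X'}=\sup\{\int_0^\infty f^*g^*\,d\lambda;\ \|g\|_X\le1\}$. Construction of $\|\cdot\|_{\overline{X}}$: (i) If $(\mathcal{R},\mu)$ is non-atomic, fix a measure-preserving map $\sigma$ from $(\mathcal{R},\mu)$ onto $[0,\mu(\mathcal{R}))$ (with Lebesgue measure $\lambda$), and for $h\in\mathcal{M}([0,\mu(\mathcal{R})),\lambda)$ put $\|h\|_{\overline{X_0}}=\|h\circ\sigma\|_X$. (ii) If $(\mathcal{R},\mu)$ is completely atomic with all atoms of measure $\beta\in(0,\infty)$, fix an enumeration $(e_n)_{n\in\mathcal{N}}$ of the atoms, $\mathcal{N}=\{n\in\mathbb{N};\,\beta n<\mu(\mathcal{R})\}$ ($0\in\mathbb{N}$), define $T(h)(e_n)=\beta^{-1}\int_{\beta n}^{\beta(n+1)}h^*\,d\lambda$ for $n\in\mathcal{N}$, and put $\|h\|_{\overline{X_0}}=\|T(h)\|_X$. In both cases define, for $f\in\mathcal{M}([0,\infty),\lambda)$, $\|f\|_{\overline{X}}=\|f^*\chi_{[0,\mu(\mathcal{R}))}\|_{\overline{X_0}}$. *)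

From HB Require Import structures.
From mathcomp Require Import all_boot all_order all_algebra.
From mathcomp Require Import all_classical all_reals all_analysis.
From mathcomp Require Import measurable_realfun.
Set Implicit Arguments. Unset Strict Implicit. Unset Printing Implicit Defensive.
Import Order.TTheory GRing.Theory Num.Theory.
Local Open Scope classical_set_scope.
Local Open Scope ring_scope.
Local Open Scope ereal_scope.

Section RIdefs.
Context {R : realType} {d : measure_display} {T : measurableType d}.

Definition distrib (mu : set T -> \bar R) (f : T -> \bar R) (s : R) : \bar R :=
  mu [set x | s%:E < `|f x|].

Definition rearr (mu : set T -> \bar R) (f : T -> \bar R) (t : R) : \bar R :=
  ereal_inf [set s%:E | s in [set s : R | (0 <= s)%R /\ distrib mu f s <= t%:E]].

Definition nonnegf (f : T -> \bar R) := forall x, 0 <= f x.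

Definition qBFN (mu : {measure set T -> \bar R}) (N : (T -> \bar R) -> \bar R) :=
  (forall f, N f = N (fun x => `|f x|)) /\
      (forall (a : R) (f : T -> \bar R), measurable_fun setT f -> nonnegf f ->
          N (fun x => a%:E * f x) = `|a|%:E * N f) /\
      (forall f : T -> \bar R, measurable_fun setT f -> nonnegf f ->
          (N f = 0 <-> {ae mu, forall x, f x = 0})) /\
      (exists C : R, (1 <= C)%R /\
          forall f g : T -> \bar R, measurable_fun setT f -> nonnegf f ->
            measurable_fun setT g -> nonnegf g ->
            N (fun x => f x + g x) <= C%:E * (N f + N g)) /\
      (forall f g : T -> \bar R, measurable_fun setT f -> nonnegf f ->
          measurable_fun setT g -> nonnegf g ->
          {ae mu, forall x, f x <= g x} -> N f <= N g) /\
      (forall (F : (T -> \bar R)^nat) f,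
          (forall n, measurable_fun setT (F n) /\ nonnegf (F n)) ->
          measurable_fun setT f -> nonnegf f ->
          {ae mu, forall x, nondecreasing_seq (fun n => F n x) /\
                            (fun n => F n x) @ \oo --> f x} ->
          nondecreasing_seq (fun n => N (F n)) /\ (fun n => N (F n)) @ \oo --> N f) /\
      (forall E, measurable E -> mu E < +oo -> N (fun x => (\1_E x)%:E) < +oo).

Definition P5 (mu : {measure set T -> \bar R}) (N : (T -> \bar R) -> \bar R) :=
  forall E, measurable E -> mu E < +oo ->
    exists C : R, forall f : T -> \bar R, measurable_fun setT f -> nonnegf f ->
      \int[mu]_(x in E) f x <= C%:E * N f.

Definition rearr_inv (mu : {measure set T -> \bar R}) (N : (T -> \bar R) -> \bar R) :=
  forall f g : T -> \bar R, measurable_fun setT f -> measurable_fun setT g ->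
    (forall t : R, (0 <= t)%R -> rearr mu f t = rearr mu g t) -> N f = N g.

Definition assoc_norm (mu : {measure set T -> \bar R}) (N : (T -> \bar R) -> \bar R)
    (f : T -> \bar R) : \bar R :=
  ereal_sup [set \int[lebesgue_measure]_(t in `[0%R, +oo[) (rearr mu f t * rearr mu g t)
            | g in [set g | measurable_fun setT g /\ N g <= 1]].

Definition atom (mu : {measure set T -> \bar R}) (A : set T) :=
  [/\ measurable A, 0 < mu A &
      forall B, measurable B -> B `<=` A -> mu B = 0 \/ mu (A `\` B) = 0].

Definition nonatomic (mu : {measure set T -> \bar R}) := forall A, ~ atom mu A.

Definition atom_index (mu : {measure set T -> \bar R}) (beta : R) : set nat :=
  [set n | (beta * n%:R)%:E < mu setT].

Definition atom_enum (mu : {measure set T -> \bar R}) (beta : R) (e : nat -> set T) :=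
  [/\ (0 < beta)%R,
      (forall n, atom_index mu beta n -> atom mu (e n) /\ mu (e n) = beta%:E),
      trivIset (atom_index mu beta) e &
      \bigcup_(n in atom_index mu beta) e n = setT].

Definition completely_atomic_eq (mu : {measure set T -> \bar R}) :=
  exists beta e, atom_enum mu beta e.

Definition resonant (mu : {measure set T -> \bar R}) :=
  nonatomic mu \/ completely_atomic_eq mu.

End RIdefs.

Lemma measurable_Ige0 (R : realType) :
  measurable (`[0%R, +oo[ : set (measurableTypeR R)).
Proof. exact: measurable_itv. Qed.

(* Lebesgue measure on [0,oo): functions on [0,oo) are represented as functions
   on R, with the Lebesgue measure restricted to [0,oo) *)
Definition lam0 (R : realType) : {measure set (measurableTypeR R) -> \bar R} :=
  mrestr lebesgue_measure (@measurable_Ige0 R).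

Definition Iset (R : realType) (m : \bar R) : set R :=
  [set t : R | (0 <= t)%R /\ t%:E < m].

Section Construction.
Context {R : realType} {d : measure_display} {T : measurableType d}.

Definition measure_preserving_onto (mu : {measure set T -> \bar R})
    (sigma : T -> measurableTypeR R) :=
  [/\ measurable_fun setT sigma,
      sigma @` setT = Iset (mu setT) &
      forall B : set (measurableTypeR R), measurable B ->
        mu (sigma @^-1` B) = lebesgue_measure (B `&` Iset (mu setT))].

(* atomic case: T(h)(e_n) = beta^{-1} int_{beta n}^{beta(n+1)} h^* ,
   h being regarded as a function on [0, mu(R)) *)
Definition Tmap (mu : {measure set T -> \bar R}) (beta : R) (e : nat -> set T)
    (h : measurableTypeR R -> \bar R) : T -> \bar R :=
  fun x => \sum_(n <oo | `[< atom_index mu beta n >])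
    ((\1_(e n) x)%:E * ((beta^-1)%:E *
      \int[lebesgue_measure]_(t in `[(beta * n%:R)%R, (beta * n.+1%:R)%R])
         rearr (lam0 R) (fun s => h s * (\1_(Iset (mu setT)) s)%:E) t)).

Definition is_Xbar0 (mu : {measure set T -> \bar R}) (N : (T -> \bar R) -> \bar R)
    (NX0 : (measurableTypeR R -> \bar R) -> \bar R) :=
  (nonatomic mu /\ exists sigma, measure_preserving_onto mu sigma /\
      forall h, NX0 h = N (h \o sigma))
  \/ (exists beta e, atom_enum mu beta e /\ forall h, NX0 h = N (Tmap mu beta e h)).

End Construction.

Definition Xbar (R : realType) (m : \bar R)
    (NX0 : (measurableTypeR R -> \bar R) -> \bar R)
    (f : measurableTypeR R -> \bar R) : \bar R :=
  NX0 (fun t => rearr (lam0 R) f t * (\1_(Iset m) t)%:E).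

(* The associate norm is a supremum of pairings [\int f^* g^*] over the unit
   ball of [X], so it suffices to compare unit balls through rearrangements.
   If [||g||_X <= 1] then [g^*] lies in the unit ball of [Xbar]: its defining
   function [(g^* chi_[0,mu(R))) o sigma] (non-atomic case), resp.
   [T(g^* chi_[0,mu(R)))] (atomic case, where [g^*] is constant on every block
   [[beta n, beta (n+1))] because [mu] only takes values in [beta N] and
   [+oo]), is equimeasurable with [g].  Conversely, if [||h||_Xbar <= 1], the
   function [G = (h^* chi) o sigma], resp. [G = T(h^* chi)], lies in the unit
   ball of [X], and [\int f^* h^* = \int f^* G^*]: in the atomic case [f^*] is
   constant on each block, on which [G^*] is the block average of [h^*]. *)

From HB Require Import structures.
From mathcomp Require Import all_boot all_order all_algebra.
From mathcomp Require Import all_classical all_reals all_analysis.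
From mathcomp Require Import measurable_realfun.
Import Order.TTheory GRing.Theory Num.Theory.
Local Open Scope classical_set_scope.
Local Open Scope ring_scope.
Local Open Scope ereal_scope.

Local Notation trunc m h := (fun t => h t * (\1_(Iset m) t)%:E).

Section real_line.
Context {R : realType}.

Lemma Iset_fin (r : R) : Iset r%:E = `[0%R, r[%classic.
Proof.
apply/seteqP; split => t; rewrite /Iset /= in_itv /= lte_fin.
  by move=> [-> ->].
by move=> /andP[-> ->].
Qed.

Lemma Iset_pinfty : Iset (+oo : \bar R) = `[0%R, +oo[%classic.
Proof.
apply/seteqP; split => t; rewrite /Iset /= in_itv /= ?andbT.
  by move=> [].
by move=> ->; rewrite ltry.
Qed.

Lemma Iset_ninfty : Iset (-oo : \bar R) = set0.
Proof. by apply/seteqP; split => t //= [_]; rewrite ltNge leNye. Qed.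

Lemma measurable_Iset (m : \bar R) : measurable (Iset m).
Proof. by case: m => [r| |]; rewrite ?Iset_fin ?Iset_pinfty ?Iset_ninfty. Qed.

Lemma lebesgue_measure_Iset (m : \bar R) : 0 <= m -> lebesgue_measure (Iset m) = m.
Proof.
case: m => [r| |] //= m0; rewrite ?Iset_fin ?Iset_pinfty lebesgue_measure_itv /=.
  rewrite lte_fin oppr0 adde0.
  by move: m0; rewrite lee_fin le_eqVlt => /orP[/eqP<-|->] //; rewrite ltxx.
by rewrite ltey.
Qed.

Lemma lam0E (A : set R) : lam0 R A = lebesgue_measure (A `&` `[0%R, +oo[).
Proof. by []. Qed.

Lemma measurable_fun_mul_indic (I : set R) (h : R -> \bar R) :
  measurable I -> measurable_fun setT h ->
  measurable_fun setT (fun t => h t * (\1_I t)%:E).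
Proof.
move=> mI mh; apply: emeasurable_funM => //.
exact/measurable_EFinP/measurable_indic.
Qed.

Lemma abse_mul_indic_gt (I : set R) (h : R -> \bar R) (s : R) :
  (0 <= s)%R -> (forall u, 0 <= h u) ->
  [set u | s%:E < `|h u * (\1_I u)%:E|] = I `&` [set u | s%:E < h u].
Proof.
move=> s0 h0; apply/seteqP; split => u /=; rewrite indicE.
  case: (boolP (u \in I)) => [/set_mem uI|uI] /=.
    by rewrite mule1 gee0_abs.
  by rewrite mule0 abse0 lte_fin ltNge s0.
by move=> [uI]; rewrite mem_set //= mule1 gee0_abs.
Qed.

Lemma mule_indic_idem (I : set R) (x : \bar R) (t : R) :
  x * (\1_I t)%:E * (\1_I t)%:E = x * (\1_I t)%:E.
Proof. by rewrite indicE; case: (t \in I); rewrite ?mule1 ?mule0. Qed.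

(* An extended-valued function is measurable as soon as its truncations
   [min F m] are, and those are real nonincreasing functions. *)
Lemma measurable_nonincreasing_ge0 (F : R -> \bar R) :
  (forall t, 0 <= F t) -> {homo F : x y / (x <= y)%R >-> y <= x} ->
  measurable_fun setT F.
Proof.
move=> F0 Fni; pose g m t := fine (Order.min (F t) m%:R%:E).
have gfin m t : Order.min (F t) m%:R%:E \is a fin_num.
  rewrite ge0_fin_numE; last by rewrite le_min F0 /= lee_fin.
  by rewrite gt_min; apply/orP; right; rewrite ltry.
apply: (emeasurable_fun_cvg (fun m t => (g m t)%:E)).
  move=> m; apply: measurableT_comp => //; apply: nonincreasing_measurable => //.
  move=> x y xy; apply: fine_le; rewrite ?inE ?gfin //.
  by apply: le_min2 => //; apply: Fni.
move=> t _; case E : (F t) => [r| |].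
- apply: cvg_near_cst; near=> m.
  rewrite /g E; suff -> : Order.min r%:E m%:R%:E = r%:E by [].
  apply/min_idPl; rewrite lee_fin.
  near: m; exists (Num.truncn r).+1 => // m /= hm.
  by apply: (le_trans (ltW (truncnS_gt r))); rewrite ler_nat.
- have -> : (fun m => (g m t)%:E) = (fun m => m%:R%:E).
    by apply/funext => m; rewrite /g E.
  exact/cvgenyP.
- by have := F0 t; rewrite E.
Unshelve. all: by end_near. Qed.

Lemma ereal_inf_ge (c : \bar R) : 0 <= c ->
  ereal_inf [set s%:E | s in [set s : R | (0 <= s)%R /\ c <= s%:E]] = c.
Proof.
case: c => [r| |] // c0.
- apply/eqP; rewrite eq_le; apply/andP; split.
    by apply: ge_ereal_inf; exists r%:E => //; exists r => //; split; rewrite -?lee_fin.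
  by apply/ereal_infP => _ [s [_ cs] <-].
- rewrite (_ : [set _ | _ in _] = set0) ?ereal_inf0 //.
  by apply/seteqP; split => x // [s [_]]; rewrite leNgt ltry.
Qed.

End real_line.

Lemma eq_rearr_at {R : realType} {d1 d2 : measure_display}
    {T1 : measurableType d1} {T2 : measurableType d2}
    (mu1 : set T1 -> \bar R) (mu2 : set T2 -> \bar R) f g (t1 t2 : R) :
  (forall s, (0 <= s)%R -> distrib mu1 f s <= t1%:E <-> distrib mu2 g s <= t2%:E) ->
  rearr mu1 f t1 = rearr mu2 g t2.
Proof.
move=> fg; rewrite /rearr; congr ereal_inf.
by apply/seteqP; split => _ [s [s0 Ds] <-]; exists s => //; split => //; apply/fg.
Qed.

Lemma eq_rearr {R : realType} {d1 d2 : measure_display}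
    {T1 : measurableType d1} {T2 : measurableType d2}
    (mu1 : set T1 -> \bar R) (mu2 : set T2 -> \bar R) f g :
  (forall s, (0 <= s)%R -> distrib mu1 f s = distrib mu2 g s) ->
  rearr mu1 f = rearr mu2 g.
Proof. by move=> fg; apply/funext => t; apply: eq_rearr_at => s /fg ->. Qed.

Section rearrangement.
Context {R : realType} {d : measure_display} {T : measurableType d}.
Variable mu : {measure set T -> \bar R}.
Implicit Types (f g : T -> \bar R) (s t : R).

Lemma measurable_abse_gt f s : measurable_fun setT f ->
  measurable [set x | s%:E < `|f x|].
Proof.
move=> mf; have := emeasurable_fun_o_infty measurableT
  (measurableT_comp (@abse_measurable _ setT) mf) s%:E.
by rewrite setTI.
Qed.

Lemma rearr_ge0 f t : 0 <= rearr mu f t.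
Proof. by apply/ereal_infP => _ [s [s0 _] <-]; rewrite lee_fin. Qed.

Lemma le_rearr f t t' : (t <= t')%R -> rearr mu f t' <= rearr mu f t.
Proof.
move=> tt'; apply: ereal_inf_le_tmp => _ [s [s0 Ds] <-]; exists s => //; split => //.
by apply: (le_trans Ds); rewrite lee_fin.
Qed.

Lemma rearr_le f t s : (0 <= s)%R -> distrib mu f s <= t%:E ->
  rearr mu f t <= s%:E.
Proof. by move=> s0 Ds; apply: ge_ereal_inf; exists s%:E => //; exists s. Qed.

Lemma rearr_eq0 f t : measurable_fun setT f -> mu setT <= t%:E ->
  rearr mu f t = 0.
Proof.
move=> mf mut; apply/eqP; rewrite eq_le rearr_ge0 andbT.
apply: rearr_le => //; apply: le_trans mut; apply: le_measure; rewrite ?inE //.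
exact: measurable_abse_gt.
Qed.

(* The right-continuity of [distrib mu f] (continuity of [mu] from below on
   the sets [{|f| > s + 1/(n+1)}]) is what makes the strict inequalities match. *)
Lemma lt_rearrP f s t : measurable_fun setT f -> (0 <= s)%R ->
  (s%:E < rearr mu f t) <-> (t%:E < distrib mu f s).
Proof.
move=> mf s0; split.
  by move=> st; rewrite ltNge; apply/negP => /(rearr_le f t _ s0); rewrite leNgt st.
move=> tD.
pose A n := [set x | (s + n.+1%:R^-1)%:E < `|f x|].
have mA n : measurable (A n) by exact: measurable_abse_gt.
have UA : \bigcup_n A n = [set x | s%:E < `|f x|].
  apply/seteqP; split => x /=.
    by move=> [n _]; apply: le_lt_trans; rewrite lee_fin lerDl.
  case E : (f x) => [r| |] /=.
  - rewrite lte_fin => /ltr_add_invr [k hk]; exists k => //.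
    by rewrite /A /= E /= lte_fin.
  - by move=> _; exists 0%N => //; rewrite /A /= E /= ltey.
  - by move=> _; exists 0%N => //; rewrite /A /= E /= ltey.
have ndA : nondecreasing_seq A.
  move=> n m nm; apply/subsetPset => x; rewrite /A /=; apply: le_lt_trans.
  by rewrite lee_fin lerD2l lef_pV2 ?posrE // ler_nat ltnS.
have mU : measurable (\bigcup_n A n) by rewrite UA; exact: measurable_abse_gt.
have cvA := nondecreasing_cvg_mu (mu:=mu) mA mU ndA.
have [n tAn] : exists n, t%:E < mu (A n).
  apply/not_existsP => tA; move: tD; apply/negP; rewrite -leNgt.
  rewrite /distrib -UA -(cvg_lim _ cvA) //; apply: lime_le.
    by apply/cvg_ex; eexists; exact: cvA.
  by apply: nearW => n /=; rewrite leNgt; apply/negP; exact: tA.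
apply: (@lt_le_trans _ _ (s + n.+1%:R^-1)%:E).
  by rewrite lte_fin ltrDl invr_gt0.
apply/ereal_infP => _ [s' [s'0 Ds'] <-]; rewrite lee_fin leNgt; apply/negP => s's.
have : mu (A n) <= distrib mu f s'.
  apply: le_measure; rewrite ?inE //; first exact: measurable_abse_gt.
  by move=> x; rewrite /A /= => fx; apply: lt_trans fx; rewrite lte_fin.
by move=> /le_trans/(_ Ds'); rewrite leNgt tAn.
Qed.

Lemma distrib_lam0_rearr f s : measurable_fun setT f -> (0 <= s)%R ->
  distrib (lam0 R) (rearr mu f) s = distrib mu f s.
Proof.
move=> mf s0; rewrite /distrib lam0E.
rewrite (_ : _ `&` _ = Iset (distrib mu f s)).
  exact/lebesgue_measure_Iset/measure_ge0.
apply/seteqP; split => t; rewrite /Iset /= in_itv /= andbT gee0_abs ?rearr_ge0 //.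
  by move=> [/(lt_rearrP f s t mf s0) ? ->].
by move=> [-> /(lt_rearrP f s t mf s0) ?].
Qed.

Lemma rearr_idem f : measurable_fun setT f -> rearr (lam0 R) (rearr mu f) = rearr mu f.
Proof. by move=> mf; apply: eq_rearr => s s0; rewrite distrib_lam0_rearr. Qed.

Lemma measurable_rearr f : measurable_fun setT (rearr mu f).
Proof.
apply: measurable_nonincreasing_ge0 => [t|x y xy]; [exact: rearr_ge0|exact: le_rearr].
Qed.

Lemma distrib_rearr_truncate (m : \bar R) f s :
  0 <= m -> measurable_fun setT f -> (0 <= s)%R ->
  distrib (lam0 R) (trunc m (rearr mu f)) s = Order.min m (distrib mu f s).
Proof.
move=> m0 mf s0; rewrite /distrib lam0E abse_mul_indic_gt //; last first.
  by move=> u; exact: rearr_ge0.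
rewrite (_ : _ `&` _ = Iset (Order.min m (distrib mu f s))).
  by rewrite lebesgue_measure_Iset // le_min m0 measure_ge0.
apply/seteqP; split => u; rewrite /Iset /=.
  by move=> [[[u0 um] /(lt_rearrP f s u mf s0) uD] _]; rewrite lt_min um uD.
move=> [u0]; rewrite lt_min => /andP[um uD]; split; last by rewrite in_itv /= u0.
by split; [split|apply/(lt_rearrP f s u mf s0)].
Qed.

Lemma rearr_truncate (m : \bar R) f t :
  measurable_fun setT f -> 0 <= m -> t%:E < m ->
  rearr (lam0 R) (trunc m (rearr mu f)) t = rearr mu f t.
Proof.
move=> mf m0 tm; apply: eq_rearr_at => s s0.
rewrite distrib_rearr_truncate // ge_min; split; last by move=> ->; rewrite orbT.
by move=> /orP[mt|//]; have := lt_le_trans tm mt; rewrite ltxx.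
Qed.

Lemma rearr_truncate_measure f : measurable_fun setT f ->
  rearr (lam0 R) (trunc (mu setT) (rearr mu f)) = rearr mu f.
Proof.
move=> mf; apply: eq_rearr => s s0; rewrite distrib_rearr_truncate //.
apply/min_idPr; apply: le_measure; rewrite ?inE //; exact: measurable_abse_gt.
Qed.

End rearrangement.

Lemma integral_rearr_truncate {R : realType} {d : measure_display}
    {T : measurableType d} (mu : {measure set T -> \bar R})
    (f : T -> \bar R) (h : R -> \bar R) :
  measurable_fun setT f -> measurable_fun setT h ->
  \int[lebesgue_measure]_(t in `[0%R, +oo[) (rearr mu f t * rearr (lam0 R) h t) =
  \int[lebesgue_measure]_(t in `[0%R, +oo[)
    (rearr mu f t * rearr (lam0 R) (trunc (mu setT) (rearr (lam0 R) h)) t).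
Proof.
move=> mf mh; apply: eq_integral => t _.
have [tm|mt] := ltP t%:E (mu setT); first by rewrite rearr_truncate.
by rewrite rearr_eq0 // !mul0e.
Qed.

Section associate_norm.
Context {R : realType} {d : measure_display} {T : measurableType d}.
Variables (mu : {measure set T -> \bar R}) (N : (T -> \bar R) -> \bar R).
Variable NX : (measurableTypeR R -> \bar R) -> \bar R.

Definition rearr_maps_ball :=
  forall g : T -> \bar R, measurable_fun setT g -> N g <= 1 -> NX (rearr mu g) <= 1.

Definition pairing_dominated (f : T -> \bar R) :=
  forall h : R -> \bar R, measurable_fun setT h -> NX h <= 1 ->
    exists2 G : T -> \bar R, measurable_fun setT G /\ N G <= 1 &
    \int[lebesgue_measure]_(t in `[0%R, +oo[) (rearr mu f t * rearr (lam0 R) h t) <=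
    \int[lebesgue_measure]_(t in `[0%R, +oo[) (rearr mu f t * rearr mu G t).

Lemma assoc_norm_eq_rearr (f : T -> \bar R) : measurable_fun setT f ->
  rearr_maps_ball -> pairing_dominated f ->
  assoc_norm mu N f = assoc_norm (lam0 R) NX (rearr mu f).
Proof.
move=> mf ballX ballXbar; rewrite /assoc_norm rearr_idem //.
apply/eqP; rewrite eq_le; apply/andP; split.
- apply/ereal_supP => _ [g [mg Ng] <-]; apply: le_ereal_sup_tmp.
  exists (\int[lebesgue_measure]_(t in `[0%R, +oo[)
      (rearr mu f t * rearr (lam0 R) (rearr mu g) t)); last by rewrite rearr_idem.
  by exists (rearr mu g) => //; split; [exact: measurable_rearr|exact: ballX].
- apply/ereal_supP => _ [h [mh Nh] <-]; apply: le_ereal_sup_tmp.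
  have [G GX le] := ballXbar h mh Nh.
  by eexists; [exists G|exact: le].
Qed.

End associate_norm.

Section nonatomic.
Context {R : realType} {d : measure_display} {T : measurableType d}.
Variables (mu : {measure set T -> \bar R}) (sigma : T -> measurableTypeR R).
Hypothesis sigma_mp : measure_preserving_onto mu sigma.
Variables (N : (T -> \bar R) -> \bar R) (NX0 : (measurableTypeR R -> \bar R) -> \bar R).
Hypothesis NX0E : forall h, NX0 h = N (h \o sigma).
Hypothesis N_ri : rearr_inv mu N.

Lemma measurable_trunc_sigma (u : R -> \bar R) : measurable_fun setT u ->
  measurable_fun setT (trunc (mu setT) u \o sigma).
Proof.
move=> mu_; apply: measurableT_comp; last by case: sigma_mp.
exact: measurable_fun_mul_indic (measurable_Iset _) mu_.
Qed.

Lemma rearr_trunc_sigma (u : R -> \bar R) : measurable_fun setT u ->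
  (forall t, 0 <= u t) ->
  rearr mu (trunc (mu setT) u \o sigma) = rearr (lam0 R) (trunc (mu setT) u).
Proof.
move=> mu_ u0; apply: eq_rearr => s s0; case: sigma_mp => _ _ mp.
have mA : measurable [set t : measurableTypeR R | s%:E < `|trunc (mu setT) u t|].
  by apply: measurable_abse_gt; exact: measurable_fun_mul_indic (measurable_Iset _) mu_.
have sub0 : Iset (mu setT) `&` [set t | s%:E < u t] `<=` `[0%R, +oo[.
  by move=> t [[t0 _] _]; rewrite /= in_itv /= t0.
rewrite /distrib lam0E (mp _ mA) abse_mul_indic_gt //.
by rewrite (setIidl sub0) (setIidl (@subIsetl _ _ _)).
Qed.

Lemma rearr_maps_ball_nonatomic : rearr_maps_ball mu N (Xbar (mu setT) NX0).
Proof.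
move=> g mg Ng; rewrite /Xbar rearr_idem // NX0E.
rewrite (N_ri _ g (measurable_trunc_sigma _ (measurable_rearr mu g)) mg) // => t _.
rewrite rearr_trunc_sigma ?rearr_truncate_measure //; first exact: measurable_rearr.
by move=> ?; exact: rearr_ge0.
Qed.

Lemma pairing_dominated_nonatomic (f : T -> \bar R) : measurable_fun setT f ->
  pairing_dominated mu N (Xbar (mu setT) NX0) f.
Proof.
move=> mf h mh; rewrite /Xbar NX0E => Nh.
exists (trunc (mu setT) (rearr (lam0 R) h) \o sigma).
  by split => //; exact: measurable_trunc_sigma _ (measurable_rearr _ _).
rewrite integral_rearr_truncate // rearr_trunc_sigma //; first exact: measurable_rearr.
by move=> ?; exact: rearr_ge0.
Qed.

End nonatomic.

Section blocks.
Context {R : realType} {beta : R}.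
Hypothesis beta_gt0 : (0 < beta)%R.

Definition block k : set R := `[(beta * k%:R)%R, (beta * k.+1%:R)%R[%classic.

Definition avg (F : R -> \bar R) n := (beta^-1)%:E *
  \int[lebesgue_measure]_(t in `[(beta * n%:R)%R, (beta * n.+1%:R)%R]) F t.

Lemma blockP k t : block k t <-> (beta * k%:R <= t)%R /\ (t < beta * k.+1%:R)%R.
Proof. by rewrite /block /= in_itv /=; split => [/andP[]|[-> ->]]. Qed.

Lemma block_lo n : block n (beta * n%:R)%R.
Proof. by apply/blockP; split => //; rewrite ltr_pM2l // ltr_nat. Qed.

Lemma block_trunc {t} : (0 <= t)%R -> block (Num.truncn (t / beta)) t.
Proof.
move=> t0; have /andP[lo hi] := truncn_itv (divr_ge0 t0 (ltW beta_gt0)).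
by apply/blockP; rewrite !(mulrC beta) -ler_pdivlMr // -ltr_pdivrMr.
Qed.

Lemma bigcup_block : `[0%R, +oo[%classic = \bigcup_k block k.
Proof.
apply/seteqP; split => t /=.
  by rewrite in_itv /= andbT => /block_trunc kt; exists (Num.truncn (t / beta)).
move=> [k _ /blockP[lo _]]; rewrite in_itv /= andbT; apply: le_trans lo.
by rewrite mulr_ge0 // ltW.
Qed.

Lemma trivIset_block : trivIset setT block.
Proof.
move=> i j _ _ [t [/blockP[i1 i2] /blockP[j1 j2]]].
case: (ltngtP i j) => // ij.
  by have := le_lt_trans j1 i2; rewrite ltr_pM2l // ltr_nat ltnS leqNgt ij.
by have := le_lt_trans i1 j2; rewrite ltr_pM2l // ltr_nat ltnS leqNgt ij.
Qed.

Lemma integral_sum_blocks (phi : R -> \bar R) : measurable_fun setT phi ->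
  (forall t, 0 <= phi t) ->
  \int[lebesgue_measure]_(t in `[0%R, +oo[) phi t =
  \sum_(k <oo) \int[lebesgue_measure]_(t in block k) phi t.
Proof.
move=> mphi phi0; rewrite bigcup_block ge0_integral_bigcup //.
- by move=> k; exact: measurable_itv.
- exact: measurable_funTS.
- exact: trivIset_block.
Qed.

Lemma lebesgue_measure_block n : lebesgue_measure (block n) = beta%:E.
Proof.
rewrite lebesgue_measure_itv /= lte_fin ltr_pM2l // ltr_nat ltnSn.
by rewrite -EFinD -addn1 natrD mulrDr mulr1 addrAC subrr add0r.
Qed.

Lemma integral_block_cst n (c : \bar R) :
  \int[lebesgue_measure]_(t in block n) cst c t = c * beta%:E.
Proof.
rewrite integral_cst; last exact: measurable_itv.
by congr (_ * _); exact: lebesgue_measure_block.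
Qed.

Lemma integral_block_avg F n : measurable_fun setT F ->
  \int[lebesgue_measure]_(t in block n) F t = beta%:E * avg F n.
Proof.
move=> mF; rewrite /avg muleA -EFinM mulfV ?gt_eqF // mul1e.
by rewrite integral_itv_bndo_bndc //; exact: measurable_funTS.
Qed.

Lemma integral_block_mul F n (c : \bar R) : measurable_fun setT F ->
  (forall t, 0 <= F t) -> 0 <= c ->
  \int[lebesgue_measure]_(t in block n) (c * F t) = c * avg F n * beta%:E.
Proof.
move=> mF F0 c0; rewrite ge0_integralZl //; last exact: measurable_funTS.
  by rewrite integral_block_avg // muleCA muleC.
exact: measurable_itv.
Qed.

Lemma avg_ge0 F n : (forall t, 0 <= F t) -> 0 <= avg F n.
Proof.
move=> F0; apply: mule_ge0; first by rewrite lee_fin invr_ge0 ltW.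
exact: integral_ge0.
Qed.

Lemma avg_cst F n (c : \bar R) : measurable_fun setT F ->
  (forall t, block n t -> F t = c) -> avg F n = c.
Proof.
move=> mF Fc; rewrite /avg -integral_itv_bndo_bndc; last exact: measurable_funTS.
rewrite (eq_integral (cst c)) => [|t /set_mem/Fc //].
by rewrite integral_block_cst muleCA -EFinM mulVf ?gt_eqF // mule1.
Qed.

Lemma avg_le F n (c : \bar R) : measurable_fun setT F -> (forall t, 0 <= F t) ->
  (forall t, block n t -> F t <= c) -> avg F n <= c.
Proof.
move=> mF F0 Fc; have c0 : 0 <= c := le_trans (F0 _) (Fc _ (block_lo n)).
rewrite /avg -integral_itv_bndo_bndc; last exact: measurable_funTS.
apply: (@le_trans _ _ ((beta^-1)%:E * \int[lebesgue_measure]_(t in block n) cst c t)).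
  apply: lee_wpmul2l; first by rewrite lee_fin invr_ge0 ltW.
  by apply: ge0_le_integral => //; exact: measurable_funTS.
by rewrite integral_block_cst muleCA -EFinM mulVf ?gt_eqF // mule1.
Qed.

Lemma le_avg F n (c : \bar R) : measurable_fun setT F -> (forall t, 0 <= F t) ->
  0 <= c -> (forall t, block n t -> c <= F t) -> c <= avg F n.
Proof.
move=> mF F0 c0 Fc; rewrite /avg -integral_itv_bndo_bndc; last exact: measurable_funTS.
apply: (@le_trans _ _ ((beta^-1)%:E * \int[lebesgue_measure]_(t in block n) cst c t)).
  by rewrite integral_block_cst muleCA -EFinM mulVf ?gt_eqF // mule1.
apply: lee_wpmul2l; first by rewrite lee_fin invr_ge0 ltW.
by apply: ge0_le_integral => //; [exact: measurable_itv|exact: measurable_funTS].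
Qed.

Lemma avg_nonincreasing F : (forall t, 0 <= F t) ->
  {homo F : x y / (x <= y)%R >-> y <= x} -> nonincreasing_seq (avg F).
Proof.
move=> F0 Fni; have mF := measurable_nonincreasing_ge0 _ F0 Fni.
apply/nonincreasing_seqP => n; apply: (@le_trans _ _ (F (beta * n.+1%:R)%R)).
  by apply: avg_le => // t /blockP[lo _]; exact: Fni.
by apply: le_avg => // t /blockP[_ hi]; apply: Fni; exact: ltW.
Qed.

End blocks.
Arguments block {R} beta k.
Arguments avg {R} beta F n.
Section atomic.
Context {R : realType} {d : measure_display} {T : measurableType d}.
Variables (mu : {measure set T -> \bar R}) (beta : R) (e : nat -> set T).
Hypothesis e_enum : atom_enum mu beta e.

Let idx := atom_index mu beta.

Let beta_gt0 : (0 < beta)%R.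
Proof. by case: e_enum. Qed.

Lemma atom_index_le n k : (n <= k)%N -> idx k -> idx n.
Proof.
move=> nk; rewrite /idx /atom_index /=; apply: le_lt_trans.
by rewrite lee_fin ler_pM2l ?beta_gt0 // ler_nat.
Qed.

Lemma measurable_atom {n} : idx n -> measurable (e n).
Proof. by case: e_enum => _ atoms _ _ /atoms [[]]. Qed.

Lemma measure_atom {n} : idx n -> mu (e n) = beta%:E.
Proof. by case: e_enum => _ atoms _ _ /atoms []. Qed.

Lemma atom_cover x : exists2 m, idx m & e m x.
Proof.
case: e_enum => _ _ _ cover.
have [m hm xm] : (\bigcup_(n in idx) e n) x by rewrite /idx cover.
by exists m.
Qed.

Lemma atom_disj {n m x} : idx n -> idx m -> e n x -> e m x -> n = m.
Proof. by case: e_enum => _ _ tI _ hn hm xn xm; apply: tI => //; exists x. Qed.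

Lemma measure_meet_atom {A n} : measurable A -> idx n ->
  mu (A `&` e n) = 0 \/ mu (A `&` e n) = beta%:E.
Proof.
move=> mA hn; have me := measurable_atom hn; have mAe := measurableI _ _ mA me.
case: e_enum => _ atoms _ _; have [[_ _ atom_split] _] := atoms n hn.
case: (atom_split (A `&` e n) mAe (@subIsetr _ _ _)) => [|mu0]; first by left.
have : mu (A `&` e n `|` e n `\` (A `&` e n)) =
    mu (A `&` e n) + mu (e n `\` (A `&` e n)).
  exact: measureU mAe (measurableD me mAe) (setDIK (A `&` e n) (e n)).
rewrite setDUK ?mu0 ?adde0 ?(measure_atom hn); last exact: subIsetr.
by right.
Qed.

Lemma measure_sum_atoms {A} : measurable A ->
  mu A = \sum_(i <oo | i \in idx) mu (A `&` e i).
Proof.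
move=> mA; rewrite -measure_bigcup.
- congr (mu _); apply/seteqP; split => [x Ax|x [m _ []] //].
  by have [m hm xm] := atom_cover x; exists m.
- by move=> i hi; apply: measurableI => //; exact: measurable_atom.
- case: e_enum => _ _ tI _ i j hi hj [x [[_ xi] [_ xj]]].
  by apply: tI => //; exists x.
Qed.

Lemma partial_sum_atoms {A} M : measurable A ->
  exists j : nat, \sum_(0 <= i < M | i \in idx) mu (A `&` e i) = (beta * j%:R)%:E.
Proof.
move=> mA; elim: M => [|M [j IH]].
  by exists 0%N; rewrite big_geq // mulr0.
rewrite big_mkcond big_nat_recr //= -big_mkcond IH.
case: ifPn => [/set_mem hM|_]; last by exists j; rewrite adde0.
case: (measure_meet_atom mA hM) => ->; first by exists j; rewrite adde0.
exists j.+1; rewrite -EFinD; congr (_%:E).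
by rewrite -addn1 natrD mulrDr mulr1.
Qed.

Lemma measure_notin_gap {A} k : measurable A ->
  ~ ((beta * k%:R)%:E < mu A /\ mu A < (beta * k.+1%:R)%:E).
Proof.
move=> mA; rewrite (measure_sum_atoms mA) => -[lt_kA lt_Ak1].
have b0 := beta_gt0.
have [M ltM] : exists M, (beta * k%:R)%:E <
    \sum_(0 <= i < M | i \in idx) mu (A `&` e i).
  apply/not_existsP => geM; move: lt_kA; apply/negP; rewrite -leNgt.
  apply: lime_le; first exact: is_cvg_nneseries.
  by apply: nearW => n /=; rewrite leNgt; apply/negP; exact: geM.
have [j Ej] := partial_sum_atoms M mA.
rewrite Ej lte_fin ltr_pM2l // ltr_nat in ltM.
have := @nneseries_lim_ge _ (fun i => mu (A `&` e i)) (fun i => i \in idx) 0%N M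
  (fun n _ _ => measure_ge0 mu _).
rewrite Ej => /le_lt_trans/(_ lt_Ak1).
by rewrite lte_fin ltr_pM2l // ltr_nat ltnS leqNgt ltM.
Qed.

Definition first_atoms k := \bigcup_(m in [set m | (m < k)%N]) e m.

Lemma measurable_first_atoms k : (forall m, (m < k)%N -> idx m) ->
  measurable (first_atoms k).
Proof. by move=> hk; apply: bigcup_measurable => m /hk; exact: measurable_atom. Qed.

Lemma measure_first_atoms k : (forall m, (m < k)%N -> idx m) ->
  mu (first_atoms k) = (beta * k%:R)%:E.
Proof.
elim: k => [|k IH] hk.
  rewrite mulr0 (_ : first_atoms 0 = set0) ?measure0 //.
  by apply/seteqP; split => x // [].
have hk' m : (m < k)%N -> idx m by move=> mk; apply: hk; exact: ltnW.
have -> : first_atoms k.+1 = first_atoms k `|` e k.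
  apply/seteqP; split => x.
    move=> [m /= mk xm]; move: mk; rewrite ltnS leq_eqVlt => /orP[/eqP <-|mk].
      by right.
    by left; exists m.
  move=> [[m /= mk xm]|xk]; first by exists m => //=; rewrite ltnS ltnW.
  by exists k => /=.
have ik := hk _ (ltnSn k).
have disj : first_atoms k `&` e k = set0.
  apply/seteqP; split => [x [[m mk xm] xk]|//].
  by move: (mk); rewrite /= (atom_disj (hk' m mk) ik xm xk) ltnn.
rewrite (_ : mu (_ `|` _) = mu (first_atoms k) + mu (e k)); last first.
  exact: measureU (measurable_first_atoms _ hk') (measurable_atom ik) disj.
by rewrite IH // (measure_atom ik) -EFinD -nat1r mulrDr mulr1 addrC.
Qed.

Lemma block_index {t} : (0 <= t)%R -> t%:E < mu setT ->
  exists2 k, idx k & block beta k t.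
Proof.
move=> t0 tm; have kt := @block_trunc R beta beta_gt0 t t0.
exists (Num.truncn (t / beta)) => //; move: kt => /blockP[lo _].
by rewrite /idx /atom_index /=; apply: le_lt_trans tm.
Qed.

Lemma rearr_block (g : T -> \bar R) {k t} : measurable_fun setT g ->
  block beta k t -> rearr mu g t = rearr mu g (beta * k%:R).
Proof.
move=> mg /blockP[lo hi]; apply: eq_rearr_at => s s0; split => Ds; last first.
  by apply: (le_trans Ds); rewrite lee_fin.
rewrite leNgt; apply/negP => kD.
apply: (measure_notin_gap k (measurable_abse_gt _ s mg)); split => //.
by apply: (le_lt_trans Ds); rewrite lte_fin.
Qed.

Lemma Tmap_atom {h m x} : idx m -> e m x ->
  Tmap mu beta e h x = avg beta (rearr (lam0 R) (trunc (mu setT) h)) m.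
Proof.
move=> hm xm; rewrite /Tmap (@nneseriesD1 _ _ m).
- rewrite eseries0 ?adde0; last first.
    move=> i _ /andP[/asboolP hi im]; rewrite indicE.
    case: (boolP (x \in e i)) => [/set_mem xi|]; last by rewrite mul0e.
    by move: im; rewrite (atom_disj hi hm xi xm) eqxx.
  by rewrite indicE mem_set // mul1e.
- move=> k _; apply: mule_ge0; first by rewrite lee_fin indicE ler0n.
  by apply: (avg_ge0 beta_gt0) => t; exact: rearr_ge0.
- exact/asboolP.
Qed.

Lemma measurable_Tmap h : measurable_fun setT (Tmap mu beta e h).
Proof.
move=> _ B mB; rewrite setTI.
set a := avg beta (rearr (lam0 R) (trunc (mu setT) h)).
rewrite (_ : _ @^-1` _ = \bigcup_(m in [set m | idx m /\ B (a m)]) e m).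
  by apply: bigcup_measurable => m [hm _]; exact: measurable_atom.
apply/seteqP; split => x /=.
  by have [m hm xm] := atom_cover x; rewrite (Tmap_atom hm xm) => Bx; exists m.
by move=> [m [hm Bm] xm]; rewrite (Tmap_atom hm xm).
Qed.

Lemma Tmap_truncate h : Tmap mu beta e (trunc (mu setT) h) = Tmap mu beta e h.
Proof.
rewrite /Tmap (_ : (fun s => _ * _ * _) = trunc (mu setT) h) //.
by apply/funext => s; exact: mule_indic_idem.
Qed.

Lemma rearr_Tmap h {k t} : idx k -> block beta k t ->
  rearr mu (Tmap mu beta e h) t = avg beta (rearr (lam0 R) (trunc (mu setT) h)) k.
Proof.
move=> hk /blockP[lo hi]; set a := avg beta (rearr (lam0 R) (trunc (mu setT) h)).
have a0 n : 0 <= a n by apply: (avg_ge0 beta_gt0) => u; exact: rearr_ge0.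
have a_ni : nonincreasing_seq a.
  apply: (avg_nonincreasing beta_gt0) => [u|u v].
    exact: rearr_ge0.
  exact: le_rearr.
have mT s := measurable_abse_gt _ s (measurable_Tmap h).
suff DT s : (0 <= s)%R -> distrib mu (Tmap mu beta e h) s <= t%:E <-> a k <= s%:E.
  rewrite -[RHS](ereal_inf_ge _ (a0 k)) /rearr; congr ereal_inf.
  by apply/seteqP; split => _ [s [s0 Ds] <-]; exists s => //; split => //; apply/DT.
move=> s0; split => Ds.
- rewrite leNgt; apply/negP => sa.
  have hk1 m : (m < k.+1)%N -> idx m.
    by move=> mk; apply: (atom_index_le m k _ hk); rewrite -ltnS.
  have : mu (first_atoms k.+1) <= distrib mu (Tmap mu beta e h) s.
    apply: le_measure; rewrite ?inE; [exact: measurable_first_atoms|exact: mT|].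
    move=> x [m /= mk xm]; rewrite (Tmap_atom (hk1 m mk) xm) gee0_abs //.
    by apply: (lt_le_trans sa); exact: a_ni.
  by rewrite measure_first_atoms // => /le_trans/(_ Ds); rewrite lee_fin leNgt hi.
- have hk0 m : (m < k)%N -> idx m.
    by move=> mk; apply: (atom_index_le m k _ hk); exact: ltnW.
  apply: (@le_trans _ _ (mu (first_atoms k))); last first.
    by rewrite measure_first_atoms // lee_fin.
  apply: le_measure; rewrite ?inE; [exact: mT|exact: measurable_first_atoms|].
  move=> x /=; have [m hm xm] := atom_cover x.
  rewrite (Tmap_atom hm xm) gee0_abs // => sx.
  exists m => //=; rewrite ltnNge; apply/negP => km.
  by have := le_trans (a_ni _ _ km) Ds; rewrite leNgt sx.
Qed.

Variables (N : (T -> \bar R) -> \bar R) (NX0 : (measurableTypeR R -> \bar R) -> \bar R).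
Hypothesis NX0E : forall h, NX0 h = N (Tmap mu beta e h).
Hypothesis N_ri : rearr_inv mu N.

Lemma rearr_maps_ball_atomic : rearr_maps_ball mu N (Xbar (mu setT) NX0).
Proof.
move=> g mg Ng; rewrite /Xbar rearr_idem // NX0E Tmap_truncate.
rewrite (N_ri _ g (measurable_Tmap _) mg) // => t t0.
have [tm|mt] := ltP t%:E (mu setT); last first.
  by rewrite !rearr_eq0 //; exact: measurable_Tmap.
have [k hk kt] := block_index t0 tm.
rewrite (rearr_Tmap _ hk kt) rearr_truncate_measure // (rearr_block _ mg kt).
by apply: (avg_cst beta_gt0) => [|u /(rearr_block _ mg)]; [exact: measurable_rearr|].
Qed.

(* On each block [beta k, beta (k+1)) the function [f^*] is constant, and the
   rearrangement of [Tmap] applied to [h^*] is the block mean of [h^*]; so the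
   two pairings agree block by block. *)
Lemma pairing_dominated_atomic (f : T -> \bar R) : measurable_fun setT f ->
  pairing_dominated mu N (Xbar (mu setT) NX0) f.
Proof.
move=> mf h mh; rewrite /Xbar NX0E Tmap_truncate => Nh.
exists (Tmap mu beta e (rearr (lam0 R) h)).
  by split => //; exact: measurable_Tmap.
set H := rearr (lam0 R) (trunc (mu setT) (rearr (lam0 R) h)).
have [mH H0] : measurable_fun setT H /\ forall t, 0 <= H t.
  by split => [|t]; [exact: measurable_rearr|exact: rearr_ge0].
rewrite integral_rearr_truncate // -/H le_eqVlt; apply/orP; left; apply/eqP.
have split_blocks (G : R -> \bar R) :
    measurable_fun setT G -> (forall t, 0 <= G t) ->
    \int[lebesgue_measure]_(t in `[0%R, +oo[) (rearr mu f t * G t) =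
    \sum_(k <oo) \int[lebesgue_measure]_(t in block beta k) (rearr mu f t * G t).
  move=> mG G0; apply: (integral_sum_blocks beta_gt0) => [|t].
    exact: emeasurable_funM (measurable_rearr _ _) mG.
  by rewrite mule_ge0 ?rearr_ge0.
rewrite (split_blocks _ mH H0).
rewrite (split_blocks _ (measurable_rearr _ _) (rearr_ge0 _ _)).
apply: eq_eseriesr => k _; have [hk|nk] := pselect (idx k); last first.
  apply: eq_integral => t /set_mem /blockP[lo _]; rewrite rearr_eq0 ?mul0e //.
  apply: (@le_trans _ _ (beta * k%:R)%:E); last by rewrite lee_fin.
  by rewrite leNgt; apply/negP.
set c := rearr mu f (beta * k%:R).
transitivity (\int[lebesgue_measure]_(t in block beta k) (c * H t)).
  by apply: eq_integral => t /set_mem kt; rewrite (rearr_block _ mf kt).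
rewrite (integral_block_mul beta_gt0) ?rearr_ge0 // -(integral_block_cst beta_gt0 k).
apply: eq_integral => t /set_mem kt.
by rewrite (rearr_block _ mf kt) (rearr_Tmap _ hk kt).
Qed.

End atomic.

Theorem mainTheorem5 (R : realType) (d : measure_display) (T : measurableType d)
    (mu : {measure set T -> \bar R})
    (N : (T -> \bar R) -> \bar R)
    (NX0 : (measurableTypeR R -> \bar R) -> \bar R) :
  sigma_finite setT mu ->
  resonant mu ->
  qBFN mu N -> rearr_inv mu N -> P5 mu N ->
  is_Xbar0 mu N NX0 ->
  forall f : T -> \bar R, measurable_fun setT f ->
    assoc_norm mu N f = assoc_norm (lam0 R) (Xbar (mu setT) NX0) (rearr mu f).
Proof.
move=> _ _ _ N_ri _ [[_ [sigma [sigma_mp NX0E]]]|[beta [e [e_enum NX0E]]]] f mf.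
- apply: (assoc_norm_eq_rearr _ _ _ _ mf).
    exact: rearr_maps_ball_nonatomic _ _ sigma_mp _ _ NX0E N_ri.
  exact: pairing_dominated_nonatomic _ _ sigma_mp _ _ NX0E _ mf.
- apply: (assoc_norm_eq_rearr _ _ _ _ mf).
    exact: rearr_maps_ball_atomic _ _ _ e_enum _ _ NX0E N_ri.
  exact: pairing_dominated_atomic _ _ _ e_enum _ _ NX0E _ mf.
Qed.
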